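(* Let $\zeta\in M^0$. If $u_k,u\in\mathrm{Conv}_{\mathrm{coe}}(\mathbb{R}^n)$ are such that $\delta^H_\zeta(u_k,u)\to 0$, then $u_k$ epi-converges to $u$ as $k\to\infty$.
   Context: $M^0$ is the set of continuous, strictly decreasing $\zeta:\mathbb{R}\to(0,\infty)$ with $\int_0^\infty\zeta(t)dt<\infty$. $\mathrm{Conv}_{\mathrm{coe}}(\mathbb{R}^n)$ is the set of proper, lower semicontinuous, convex, coercive functions $u:\mathbb{R}^n\to\mathbb{R}\cup\{+\infty\}$. With $\mathcal{K}^n$ the non-empty compact convex sets and $d_H$ the Hausdorff metric, define $\hat d_H$ on $\mathcal{K}^n\cup\{\emptyset\}$ by $\hat d_H(K,L)=d_H(K,L)$ if both non-empty, $\hat d_H(\emptyset,\emptyset)=0$, and $\hat d_H(K,\emptyset)=\hat d_H(\emptyset,K)=\max\{1,d_H(K,\{0\})\}$ for $K\ne\emptyset$. Then $\delta^H_\zeta(u,v)=\int_0^{\infty}\hat d_H(\{\zeta\circ u\ge s\},\{\zeta\circ v\ge s\})\,ds$, where $\{\zeta\circ u\ge s\}=\{x:\zeta(u(x))\ge s\}$ and $\zeta(+\infty):=0$. Epi-convergence $u_k\to u$: for every $x$, $\liminf_k u_k(x_k)\ge u(x)$ for all $x_k\to x$ and $\limsup_k u_k(x_k)\le u(x)$ for some $x_k\to x$. *)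

From HB Require Import structures.
From mathcomp Require Import all_boot all_order all_algebra.
From mathcomp Require Import all_classical all_reals all_analysis.
Set Implicit Arguments. Unset Strict Implicit. Unset Printing Implicit Defensive.
Import Order.TTheory GRing.Theory Num.Theory.
Import numFieldNormedType.Exports.
Local Open Scope classical_set_scope.
Local Open Scope ring_scope.

Section Defs.
Context {R : realType} {n : nat}.
Notation V := 'rV[R]_n.

Definition eucl_norm (x : V) : R := Num.sqrt (\sum_(i < n) x ord0 i ^+ 2).

(* distance from a point to a set (inf over the empty set is +oo) *)
Definition edist_pt (x : V) (L : set V) : \bar R :=
  ereal_inf [set (eucl_norm (x - y))%:E | y in L].

Definition hausdorff (K L : set V) : \bar R :=
  maxe (ereal_sup [set edist_pt x L | x in K])
       (ereal_sup [set edist_pt y K | y in L]).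

Definition hat_dH (K L : set V) : \bar R :=
  if `[< K = set0 >] then
    (if `[< L = set0 >] then 0%E else maxe 1%E (hausdorff L [set 0]))
  else if `[< L = set0 >] then maxe 1%E (hausdorff K [set 0])
  else hausdorff K L.

Definition M0 (zeta : R -> R) : Prop :=
  continuous zeta /\
  (forall s t : R, s < t -> zeta t < zeta s) /\
  (forall t : R, 0 < zeta t) /\
  (\int[lebesgue_measure]_(t in `[0%R, +oo[) (zeta t)%:E < +oo)%E.

(* zeta extended to R u {+oo} with zeta(+oo) := 0 (the value at -oo is
   irrelevant since proper functions never take the value -oo) *)
Definition zeta_ext (zeta : R -> R) (a : \bar R) : R :=
  match a with EFin r => zeta r | _ => 0 end.

Definition suplev (zeta : R -> R) (u : V -> \bar R) (s : R) : set V :=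
  [set x | s <= zeta_ext zeta (u x)].

Definition deltaH (zeta : R -> R) (u v : V -> \bar R) : \bar R :=
  (\int[lebesgue_measure]_(s in `[0%R, +oo[)
     hat_dH (suplev zeta u s) (suplev zeta v s))%E.

Definition proper_fun (u : V -> \bar R) : Prop :=
  (forall x, u x != -oo%E) /\ (exists x, u x != +oo%E).

Definition convex_fun (u : V -> \bar R) : Prop :=
  forall (x y : V) (l : R), 0 < l < 1 ->
    (u (l *: x + (1 - l) *: y)%R <= l%:E * u x + (1 - l)%:E * u y)%E.

Definition coercive (u : V -> \bar R) : Prop :=
  forall M : R, exists r : R, forall x, r < eucl_norm x -> (M%:E < u x)%E.

Definition Conv_coe (u : V -> \bar R) : Prop :=
  proper_fun u /\ lower_semicontinuous u /\ convex_fun u /\ coercive u.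

Definition epi_converges (uk : nat -> V -> \bar R) (u : V -> \bar R) : Prop :=
  forall x : V,
    (forall xk : nat -> V, xk @ \oo --> x ->
        (u x <= limn_einf (fun k => uk k (xk k)))%E) /\
    (exists2 xk : nat -> V, xk @ \oo --> x &
        (limn_esup (fun k => uk k (xk k)) <= u x)%E).

End Defs.

From HB Require Import structures.
From mathcomp Require Import all_boot all_order all_algebra.
From mathcomp Require Import all_classical all_reals all_analysis.
From mathcomp Require Import lra.
Import Order.TTheory GRing.Theory Num.Theory.
Import numFieldNormedType.Exports.
Import HBNNSimple.
Local Open Scope classical_set_scope.
Local Open Scope ring_scope.

(* Liminf inequality: if [u x > t2 > t1], lower semicontinuity keeps the
   sublevel set [u <= t2] at some distance [r] from [x], whereas [u_k (x_k) <= t1]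
   puts [x_k] in every superlevel set [{zeta o u_k >= s}] with
   [zeta t2 <= s <= zeta t1].  On these levels the Hausdorff distance to
   [{zeta o u >= s}] is at least [min (r/2) 1], so
   [delta (u_k, u) >= min (r/2) 1 * (zeta t1 - zeta t2)], which is impossible for
   large [k].  The same estimate with the roles of [u_k] and [u] exchanged shows
   that, when [u x = t0 < t], for large [k] some point [e]-close to [x] has
   [u_k <= t]; a diagonal choice along [t = t0 + 1/(j+1)], [e = 1/(j+1)] gives
   the recovery sequence. *)

Section extended_reals.
Context {R : realType}.
Local Open Scope ereal_scope.

Lemma lee_of_between (a b : \bar R) :
  (forall t1 t2 : R, (t1 < t2)%R -> t2%:E < a -> t1%:E <= b) -> a <= b.
Proof.
case: a => [s| |] between; last by rewrite leNye.
- apply/lee_subgt0Pr => e e0; apply: (between (s - e) (s - e / 2))%R.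
    by rewrite ltrD2l ltrN2 ltr_pdivrMr // ltr_pMr // ltr1n.
  by rewrite lte_fin gtrDl oppr_lt0 divr_gt0.
- case: b between => [r| |] between //.
    have := between (r + 1)%R (r + 2)%R; rewrite ltrD2l ltr1n ltry.
    by move=> /(_ erefl erefl); rewrite lee_fin gerDl ler10.
  by have := between 0%R 1%R ltr01 (ltry _).
Qed.

Lemma limn_esup_le_near (u : (\bar R)^nat) (c : \bar R) :
  (\forall k \near \oo, u k <= c) -> limn_esup u <= c.
Proof.
move=> [N _ uc]; apply: ge_ereal_inf; exists (ereal_sup (u @` [set k | (N <= k)%N])).
  by exists [set k | (N <= k)%N] => //; exists N.
by apply: ge_ereal_sup => _ [k Nk <-]; exact: uc.
Qed.

Lemma limn_einf_ge_near (u : (\bar R)^nat) (c : \bar R) :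
  (\forall k \near \oo, c <= u k) -> c <= limn_einf u.
Proof.
move=> cu; rewrite /limn_einf leeNr; apply: limn_esup_le_near.
by apply: filterS cu => k; rewrite leeN2.
Qed.

(* No measurability of [f] is needed: the integral of a nonnegative function
   is the supremum of the integrals of the simple functions below it. *)
Lemma integral_ge_rectangle (f : R -> \bar R) (a b eps : R) :
  (forall s, (0 <= s)%R -> 0 <= f s) -> (0 <= a)%R -> (a <= b)%R -> (0 <= eps)%R ->
  (forall s, (a <= s <= b)%R -> eps%:E <= f s) ->
  (eps * (b - a))%:E <= \int[lebesgue_measure]_(s in `[0%R, +oo[) f s.
Proof.
move=> f0 a0 ab eps0 f_ge.
rewrite ge0_integralE; last by move=> s /=; rewrite in_itv /= andbT; exact: f0.
have mab : @measurable _ (g_sigma_algebraType R.-ocitv.-measurable)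
  (`[a, b]%classic : set R) by exact: measurable_itv.
pose h := scale_nnsfun (indic_nnsfun R mab) eps0.
apply: (@le_trans _ _ (sintegral lebesgue_measure h)); last first.
  apply: ereal_sup_ubound; exists h => // x.
  rewrite /h /= /patch /= measurable_realfun.mindicE.
  have [|xab] := boolP (x \in `[a, b]%classic); last first.
    by rewrite mulr0; case: ifP => // /[!inE]; rewrite /= in_itv /= andbT; exact: f0.
  rewrite inE /= in_itv /= => /andP[ax xb]; rewrite mulr1.
  have -> : x \in (`[0%R, +oo[%classic : set R).
    by rewrite inE /= in_itv /= andbT (le_trans a0).
  by apply: f_ge; rewrite ax.
rewrite /h sintegralrM sintegral_indic /= lebesgue_measure_itv /= lte_fin.
have [_|ba] := ltP a b; first by rewrite -EFinD -EFinM.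
have -> : b = a by apply/eqP; rewrite eq_le ab ba.
by rewrite subrr mulr0 mule0.
Qed.

End extended_reals.

Lemma near_diagonal (T : choiceType) (P : nat -> nat -> T -> Prop) :
  (forall i j k y, (i <= j)%N -> P j k y -> P i k y) ->
  (forall j, \forall k \near \oo, exists y, P j k y) ->
  exists ys : nat -> T, forall j, \forall k \near \oo, P j k (ys k).
Proof.
move=> P_anti P_near.
have [y0 _] : exists y : T, True.
  by have [N _ PN] := P_near 0%N; have [y _] := PN N (leqnn N); exists y.
pose Q k : {pred 'I_k.+1} := [pred j : 'I_k.+1 | `[< exists y, P j k y >]].
pose jk k := \max_(j in Q k) j.
exists (fun k => xget y0 (P (jk k) k)) => j.
near=> k.
have P0 : exists y, P 0%N k y by near: k; exact: P_near.
have Pj : exists y, P j k y by near: k; exact: P_near.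
have jk1 : (j < k.+1)%N by rewrite ltnS; near: k; exists j.
have jjk : (j <= jk k)%N by apply: (@leq_bigmax_cond _ _ _ (Ordinal jk1)); exact: asboolT Pj.
have [j0 Qj0 jkE] : {j0 | j0 \in Q k & jk k = j0}.
  by apply: eq_bigmax_cond; apply/card_gt0P; exists ord0; exact: asboolT P0.
apply: (P_anti _ _ _ _ jjk); case: xgetP => // none.
by move: Qj0 => /asboolP[y]; rewrite -jkE => /none.
Unshelve. all: by end_near. Qed.

Section hausdorff_distance.
Context {R : realType} {n : nat}.
Notation V := 'rV[R]_n.
Implicit Types (K L : set V).

Lemma mx_norm_le_eucl_norm (v : V) : `|v| <= eucl_norm v.
Proof.
change (mx_norm v <= eucl_norm v); rewrite mx_normrE.
apply: bigmax_le => [|[i j] _ /=]; first exact: sqrtr_ge0.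
rewrite (ord1 i) /eucl_norm -sqrtr_sqr ler_sqrt; last by apply: sumr_ge0 => k _; exact: sqr_ge0.
by rewrite (bigD1 j) //= lerDl; apply: sumr_ge0 => k _; exact: sqr_ge0.
Qed.

Lemma hat_dHC K L : hat_dH K L = hat_dH L K.
Proof.
rewrite /hat_dH; case: (asboolP (K = set0)); case: (asboolP (L = set0)) => //.
by rewrite /hausdorff maxC.
Qed.

Lemma hat_dH_ge0 K L : (0 <= hat_dH K L)%E.
Proof.
rewrite /hat_dH; case: ifP => [_|/negbT/asboolPn/eqP/set0P [x Kx]].
  by case: ifP => _ //; rewrite le_max lee01.
case: ifP => _; first by rewrite le_max lee01.
rewrite /hausdorff le_max; apply/orP; left.
apply: le_trans (ereal_sup_ubound _); last by exists x.
by apply: le_ereal_inf_tmp => _ [y Ly <-]; rewrite lee_fin; exact: sqrtr_ge0.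
Qed.

Lemma hat_dH_ge_far K L x (eps : R) : eps <= 1 -> K x ->
  (forall y, L y -> eps <= eucl_norm (x - y)) -> (eps%:E <= hat_dH K L)%E.
Proof.
move=> eps1 Kx far; rewrite /hat_dH.
have -> : `[< K = set0 >] = false by apply/asboolP => K0; rewrite K0 in Kx.
case: ifP => _; first by rewrite le_max lee_fin eps1.
rewrite /hausdorff le_max; apply/orP; left.
apply: le_trans (ereal_sup_ubound _); last by exists x.
by apply: le_ereal_inf_tmp => _ [y Ly <-]; rewrite lee_fin; exact: far.
Qed.

End hausdorff_distance.

Section superlevel_sets.
Context {R : realType} {n : nat}.
Notation V := 'rV[R]_n.
Context {zeta : R -> R}.
Hypothesis zeta_decr : forall s t, s < t -> zeta t < zeta s.
Hypothesis zeta_gt0 : forall t, 0 < zeta t.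

Let zeta_le : {mono zeta : s t /~ s <= t}.
Proof. exact: le_nmono (fun s t => zeta_decr t s). Qed.

Implicit Types (u v w : V -> \bar R).

Lemma deltaHC v w : deltaH zeta v w = deltaH zeta w v.
Proof. by apply: eq_integral => s _; rewrite hat_dHC. Qed.

Lemma suplev_sublevel u x s t : u x != -oo%E -> (u x <= t%:E)%E -> s <= zeta t ->
  suplev zeta u s x.
Proof.
rewrite /suplev /=; case: (u x) => [r| |] //= _; rewrite ?leey // lee_fin => rt st.
by rewrite (le_trans st) // zeta_le.
Qed.

Lemma suplev_sub_sublevel u [s t] : zeta t <= s ->
  suplev zeta u s `<=` [set y | (u y <= t%:E)%E].
Proof.
rewrite /suplev => ts y /=; case: (u y) => [r| |] /= => [|/(le_trans ts)|]; last by rewrite leNye.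
  by move=> /(le_trans ts); rewrite zeta_le lee_fin.
by rewrite leNgt zeta_gt0.
Qed.

Lemma deltaH_ge_far v w x t1 t2 (eps : R) : t1 < t2 -> 0 <= eps ->
  v x != -oo%E -> (v x <= t1%:E)%E ->
  (forall y, (w y <= t2%:E)%E -> eps <= eucl_norm (x - y)) ->
  ((Num.min eps 1 * (zeta t1 - zeta t2))%:E <= deltaH zeta v w)%E.
Proof.
move=> t12 eps0 vx_fin vxt1 far; apply: integral_ge_rectangle.
- by move=> s _; exact: hat_dH_ge0.
- exact/ltW/zeta_gt0.
- exact/ltW/zeta_decr.
- by rewrite le_min eps0 ler01.
move=> s /andP[t2s st1]; apply: (@hat_dH_ge_far _ _ _ _ x).
- by rewrite ge_min lexx orbT.
- exact: suplev_sublevel vx_fin vxt1 st1.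
- by move=> y /(suplev_sub_sublevel w t2s)/far epsy; rewrite ge_min epsy.
Qed.

Section deltaH_cvg0.
Context {uk : nat -> V -> \bar R} {u : V -> \bar R}.
Hypothesis dH0 : (fun k => deltaH zeta (uk k) u) @ \oo --> 0%E.

Let deltaH_lt c : 0 < c -> \forall k \near \oo, (deltaH zeta (uk k) u < c%:E)%E.
Proof. by move=> c0; apply: (dH0 [set y | (y < c%:E)%E]); exact: open_ereal_lt'. Qed.

Lemma deltaH_cvg0_liminf x (xk : nat -> V) :
  (forall k y, uk k y != -oo%E) -> lower_semicontinuous u -> xk @ \oo --> x ->
  (u x <= limn_einf (fun k => uk k (xk k)))%E.
Proof.
move=> uk_fin u_lsc xkx; apply: lee_of_between => t1 t2 t12 t2ux.
apply: limn_einf_ge_near.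
have [W /nbhs_ballP[r r0 rW] Wt2] := u_lsc x t2 t2ux.
have r2_gt0 : 0 < r / 2 by rewrite divr_gt0.
pose c := Num.min (r / 2) 1 * (zeta t1 - zeta t2).
have c0 : 0 < c by rewrite mulr_gt0 ?lt_min ?r2_gt0 ?ltr01 // subr_gt0 zeta_decr.
near=> k.
have xxk : `|x - xk k| < r / 2 by near: k; exact: (cvgrPdist_lt _ _).1 xkx _ r2_gt0.
have dHk : (deltaH zeta (uk k) u < c%:E)%E by near: k; exact: deltaH_lt.
rewrite leNgt; apply/negP => /ltW ukt1; move: dHk; apply/negP; rewrite -leNgt.
apply: deltaH_ge_far ukt1 _ => //; first exact: ltW.
move=> y uyt2; apply: le_trans (mx_norm_le_eucl_norm _).
have xy : r <= `|x - y|.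
  rewrite leNgt; apply/negP => xy.
  have /rW/Wt2 : ball x r y by rewrite -ball_normE.
  by rewrite ltNge uyt2.
have := le_trans xy (ler_distD (xk k) x y).
lra.
Unshelve. all: by end_near. Qed.

Lemma deltaH_cvg0_sublevel_near [x t0 t e] : u x = t0%:E -> t0 < t -> 0 < e ->
  \forall k \near \oo, exists2 y, `|x - y| < e & (uk k y <= t%:E)%E.
Proof.
move=> uxt0 t0t e0.
pose c := Num.min e 1 * (zeta t0 - zeta t).
have c0 : 0 < c by rewrite mulr_gt0 ?lt_min ?e0 ?ltr01 // subr_gt0 zeta_decr.
near=> k.
have dHk : (deltaH zeta (uk k) u < c%:E)%E by near: k; exact: deltaH_lt.
apply: contrapT => none; move: dHk; apply/negP; rewrite -leNgt deltaHC.
apply: (@deltaH_ge_far _ _ x) (ltW e0) _ _ _ => //; rewrite ?uxt0 //.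
move=> y ukyt; apply: le_trans (mx_norm_le_eucl_norm _).
by rewrite leNgt; apply/negP => xye; apply: none; exists y.
Unshelve. all: by end_near. Qed.

Lemma deltaH_cvg0_recovery x : u x != -oo%E ->
  exists2 xk : nat -> V, xk @ \oo --> x & (limn_esup (fun k => uk k (xk k)) <= u x)%E.
Proof.
case ux: (u x) => [t0| |] // _; last by exists (fun=> x); [exact: cvg_cst|rewrite leey].
have natSinv_lt (e : R) : 0 < e -> exists j : nat, j.+1%:R^-1 < e.
  by move=> e0; have [N _ /(_ N (leqnn N))] := near_infty_natSinv_lt (PosNum e0); exists N.
pose P j k y := `|x - y| < j.+1%:R^-1 /\ (uk k y <= (t0 + j.+1%:R^-1)%:E)%E.
have [xk xkP] : exists xk : nat -> V, forall j, \forall k \near \oo, P j k (xk k).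
  apply: near_diagonal => [i j k y ij [xy uky]|j].
    have ji : j.+1%:R^-1 <= i.+1%:R^-1 :> R by rewrite lef_pV2 ?posrE // ler_nat ltnS.
    by split; [exact: lt_le_trans ji|apply: le_trans uky _; rewrite lee_fin lerD2l].
  have j_gt0 : 0 < j.+1%:R^-1 :> R by rewrite invr_gt0.
  have t0_lt : t0 < t0 + j.+1%:R^-1 by rewrite ltrDl.
  apply: filterS (deltaH_cvg0_sublevel_near ux t0_lt j_gt0) => k [y].
  by exists y.
exists xk.
  apply/cvgrPdist_lt => e /natSinv_lt[j je].
  by apply: filterS (xkP j) => k [xxk _]; exact: lt_trans je.
apply/lee_addgt0Pr => e /natSinv_lt[j je]; apply: limn_esup_le_near.
by apply: filterS (xkP j) => k [_ /le_trans]; apply; rewrite lee_fin lerD2l ltW.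
Qed.

End deltaH_cvg0.

End superlevel_sets.

Theorem proposition5p9 (R : realType) (n : nat) (zeta : R -> R)
  (uk : nat -> 'rV[R]_n -> \bar R) (u : 'rV[R]_n -> \bar R) :
  M0 zeta ->
  (forall k, Conv_coe (uk k)) -> Conv_coe u ->
  (fun k => deltaH zeta (uk k) u) @ \oo --> 0%E ->
  epi_converges uk u.
Proof.
move=> [_ [zeta_decr [zeta_gt0 _]]] uk_coe [[u_fin _] [u_lsc _]] dH0 x; split.
  move=> xk xkx; apply: (deltaH_cvg0_liminf zeta_decr zeta_gt0 dH0) => // k.
  exact: (uk_coe k).1.1.
exact: (deltaH_cvg0_recovery zeta_decr zeta_gt0 dH0).
Qed.
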